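(* For every graph $G$ on $n\ge 2$ vertices, $\rho_T(G)\le n-1$.
   Context: Graphs are finite and simple. For $u,v\in(\mathbb{R}\cup\{\infty\})^k$ the min-plus tropical dot product is $u\odot v=\min\{u_1+v_1,\dots,u_k+v_k\}$ (with $a+\infty=\infty$). A min-plus $k$-tropical dot product representation of a graph $G=(V,E)$ is a map $f:V\to(\mathbb{R}\cup\{\infty\})^k$ together with a threshold $t>0$ such that for all distinct $x,y\in V$: $xy\in E$ if and only if $f(x)\odot f(y)\ge t$. $\rho_T(G)$ denotes the least $k\ge 1$ for which $G$ has a min-plus $k$-tropical dot product representation. *)

From mathcomp Require Import all_boot.
From Stdlib Require Import Reals.

Set Implicit Arguments.
Unset Strict Implicit.
Unset Printing Implicit Defensive.

(* Extended reals R ∪ {∞}: [Some x] is the real x, [None] is ∞. *)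
Definition extR := option R.

Definition eplus (a b : extR) : extR :=
  match a, b with
  | Some x, Some y => Some (x + y)%R
  | _, _ => None
  end.

Definition emin (a b : extR) : extR :=
  match a, b with
  | Some x, Some y => Some (Rmin x y)
  | Some x, None => Some x
  | None, b => b
  end.

Definition ege (a : extR) (t : R) : Prop :=
  match a with
  | Some x => (t <= x)%R
  | None => True
  end.

Definition tdot (k : nat) (u v : 'I_k -> extR) : extR :=
  foldr emin None [seq eplus (u i) (v i) | i <- enum 'I_k].

Definition trop_rep (V : finType) (e : rel V) (k : nat)
    (f : V -> 'I_k -> extR) (t : R) : Prop :=
  (0 < t)%R /\
  forall x y : V, x <> y -> (e x y <-> ege (tdot (f x) (f y)) t).

Definition has_trop_rep (V : finType) (e : rel V) (k : nat) : Prop :=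
  exists (f : V -> 'I_k -> extR) (t : R), trop_rep e f t.

(** Fix k coordinates, each labelled by a vertex, such that of any
    two distinct vertices at least one occurs as a label.  Give x the value 0
    at its own coordinates, 1 at the coordinates of its neighbours and 1/2
    elsewhere.  With threshold 1, a coordinate not labelled by x or y always
    contributes at least 1/2 + 1/2, while a coordinate labelled by x
    contributes 1 or 1/2 according as y is or is not adjacent to x.  Labelling
    the coordinates by all vertices but one gives k = n - 1. *)

From mathcomp Require Import all_boot.
From Stdlib Require Import Reals Lra.
From mathcomp Require Import zify.

Set Implicit Arguments.
Unset Strict Implicit.

Lemma ege_emin (a b : extR) (t : R) : ege (emin a b) t <-> ege a t /\ ege b t.
Proof.
case: a => [x|]; case: b => [y|] /=; try tauto.
rewrite /Rmin; case: Rle_dec; split; intuition lra.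
Qed.

Lemma ege_foldr_emin (I : eqType) (g : I -> extR) (s : seq I) (t : R) :
  ege (foldr emin None [seq g i | i <- s]) t <-> forall i, i \in s -> ege (g i) t.
Proof.
elim: s => [|a s IH] /=; first by split.
rewrite ege_emin IH; split=> [[ga gs] i | gs].
  by rewrite in_cons => /orP [/eqP -> | /gs].
by split=> [|i si]; apply: gs; rewrite in_cons ?eqxx ?si ?orbT.
Qed.

Lemma ege_tdot (k : nat) (u v : 'I_k -> extR) (t : R) :
  ege (tdot u v) t <-> forall j, ege (eplus (u j) (v j)) t.
Proof.
rewrite /tdot ege_foldr_emin.
by split=> [uv j | uv j _]; [apply: uv; rewrite mem_enum | apply: uv].
Qed.

Section CoverRepresentation.

Variables (V : finType) (e : rel V) (k : nat) (c : 'I_k -> V).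
Hypothesis e_sym : symmetric e.
Hypothesis c_cover : forall x y : V, x <> y -> exists j, c j = x \/ c j = y.

Definition cover_coord (x : V) (j : 'I_k) : R :=
  if c j == x then 0%R else if e x (c j) then 1%R else (/ 2)%R.

Definition cover_rep (x : V) (j : 'I_k) : extR := Some (cover_coord x j).

Lemma cover_coord_ge_half (x : V) (j : 'I_k) : c j != x -> (/ 2 <= cover_coord x j)%R.
Proof. by rewrite /cover_coord => /negbTE ->; case: ifP => _; lra. Qed.

Lemma cover_coord_label (x y : V) (j : 'I_k) : x <> y -> c j = x ->
  (cover_coord x j + cover_coord y j)%R = if e x y then 1%R else (/ 2)%R.
Proof.
move=> /eqP /negbTE xy cjx; rewrite /cover_coord cjx eqxx xy e_sym.
by case: ifP => _; lra.
Qed.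

Lemma trop_rep_cover : trop_rep e cover_rep 1%R.
Proof.
split=> [|x y xy]; first lra.
have yx : y <> x by move=> /esym.
rewrite ege_tdot /=; split=> [exy j | dot_ge].
  have [cjx | cjx] := eqVneq (c j) x; first by rewrite cover_coord_label // exy; lra.
  have [cjy | cjy] := eqVneq (c j) y.
    by rewrite Rplus_comm (cover_coord_label yx cjy) e_sym exy; lra.
  by have := cover_coord_ge_half cjx; have := cover_coord_ge_half cjy; lra.
apply/negPn/negP => /negbTE nexy; have [j [cjx | cjy]] := c_cover xy.
  by have := dot_ge j; rewrite cover_coord_label // nexy; lra.
by have := dot_ge j; rewrite Rplus_comm (cover_coord_label yx cjy) e_sym nexy; lra.
Qed.

End CoverRepresentation.

Lemma ord_neq_lt_pred (n : nat) (a b : 'I_n) : a != b -> a < n - 1 \/ b < n - 1.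
Proof. by rewrite -val_eqE /=; have := ltn_ord a; have := ltn_ord b; lia. Qed.

Lemma enum_val_cover_but_last (V : finType) (x y : V) : x <> y ->
  exists j : 'I_(#|V| - 1),
    enum_val (widen_ord (leq_subr 1 #|V|) j) = x \/
    enum_val (widen_ord (leq_subr 1 #|V|) j) = y.
Proof.
have enum_val_rank (z : V) (lz : enum_rank z < #|V| - 1) :
    enum_val (widen_ord (leq_subr 1 #|V|) (Ordinal lz)) = z.
  by rewrite -[RHS]enum_rankK; congr enum_val; apply: val_inj.
move=> xy; have /ord_neq_lt_pred [lx | ly] : enum_rank x != enum_rank y.
- by apply/eqP => /enum_rank_inj.
- by exists (Ordinal lx); left; apply: enum_val_rank.
- by exists (Ordinal ly); right; apply: enum_val_rank.
Qed.

Theorem mainTheorem3 (V : finType) (e : rel V) :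
  symmetric e -> irreflexive e -> 2 <= #|V| ->
  exists k : nat, 1 <= k <= #|V| - 1 /\ has_trop_rep e k.
Proof.
move=> e_sym _ n_ge2; exists (#|V| - 1); split; first by rewrite leqnn andbT; lia.
exists (cover_rep e (fun j => enum_val (widen_ord (leq_subr 1 #|V|) j))), 1%R.
by apply: trop_rep_cover => // x y; apply: enum_val_cover_but_last.
Qed.
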